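(* There exist a positive integer $t$ and a constant $c>0$ such that for every integer $n\geq 3$ (logarithms natural), $$R_t(3,n)\geq c\, n\frac{\log n}{\log\log n}.$$
   Context: A function $f:\mathbb{R}^{m}\to\mathbb{R}$ is linear if $f(\mathbf{x})=b+\sum_{i=1}^m a_i\mathbf{x}(i)$ for some reals $a_1,\dots,a_m,b$. A (finite, simple) graph $G$ is semilinear of complexity $t$ if $V(G)\subset\mathbb{R}^d$ for some positive integer $d$, and there are $t$ linear functions $f_1,\dots,f_t:\mathbb{R}^d\times\mathbb{R}^d\to\mathbb{R}$ and a Boolean function $\phi:\{\mathrm{F},\mathrm{T}\}^{3t}\to\{\mathrm{F},\mathrm{T}\}$ such that for distinct $\mathbf{x},\mathbf{y}\in V(G)$, $\{\mathbf{x},\mathbf{y}\}$ is an edge iff $\phi\big(\{f_i(\mathbf{x},\mathbf{y})<0,\ f_i(\mathbf{x},\mathbf{y})\leq 0,\ f_i(\mathbf{x},\mathbf{y})=0\}_{i\in[t]}\big)=\mathrm{T}$; it is assumed that this truth value is unchanged when $\mathbf{x}$ and $\mathbf{y}$ are swapped. $R_t(s,n)$ denotes the smallest $N$ such that every semilinear graph of complexity $t$ on $N$ vertices contains a clique of size $s$ or an independent set of size $n$. *)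

From HB Require Import structures.
From Stdlib Require Import Reals.
From mathcomp Require Import all_boot all_order all_algebra.
From mathcomp Require Import Rstruct.

Set Implicit Arguments.
Unset Strict Implicit.
Unset Printing Implicit Defensive.

Import Order.TTheory GRing.Theory Num.Theory.
Local Open Scope ring_scope.

(* A linear function f : R^d x R^d -> R, f(x,y) = b + sum_i a_i x(i) + sum_i a'_i y(i),
   represented by its coefficients (a, a', b). *)
Definition lincoef (d : nat) : Type := ('rV[R]_d * 'rV[R]_d * R)%type.

Definition lin_eval (d : nat) (f : lincoef d) (x y : 'rV[R]_d) : R :=
  f.2 + \sum_(k < d) f.1.1 0 k * x 0 k + \sum_(k < d) f.1.2 0 k * y 0 k.

(* The Boolean function phi : {F,T}^{3t} -> {F,T}, its 3t inputs grouped as three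
   t-tuples: the values of [f_i < 0], [f_i <= 0], [f_i = 0] for i in [t]. *)
Definition boolfun (t : nat) : Type :=
  {ffun 'I_t -> bool} -> {ffun 'I_t -> bool} -> {ffun 'I_t -> bool} -> bool.

Definition semilin_adj (d t : nat) (F : 'I_t -> lincoef d) (phi : boolfun t)
  (x y : 'rV[R]_d) : bool :=
  phi [ffun i => lin_eval (F i) x y < 0]
      [ffun i => lin_eval (F i) x y <= 0]
      [ffun i => lin_eval (F i) x y == 0].

Definition ramsey_prop (t s n N : nat) : Prop :=
  forall (d : nat) (pts : 'I_N -> 'rV[R]_d) (F : 'I_t -> lincoef d) (phi : boolfun t),
    (0 < d)%N ->
    injective pts ->
    (forall i j : 'I_N, i != j ->
        semilin_adj F phi (pts i) (pts j) = semilin_adj F phi (pts j) (pts i)) ->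
    (exists S : {set 'I_N}, #|S| = s /\
        forall i j, i \in S -> j \in S -> i != j -> semilin_adj F phi (pts i) (pts j))
    \/
    (exists S : {set 'I_N}, #|S| = n /\
        forall i j, i \in S -> j \in S -> i != j -> ~~ semilin_adj F phi (pts i) (pts j)).

(* R_t(s,n) is the smallest N with [ramsey_prop t s n N].  "R_t(s,n) >= x" for a
   real x means that no natural number N < x has this property. *)
Definition Rt_ge (t s n : nat) (x : R) : Prop :=
  forall N : nat, (INR N < x)%R -> ~ ramsey_prop t s n N.

(* Take the complete binary tree on the leaves 0, ..., A - 1, A = M 2^(K+1), and
   for each level e <= K one vertex per leaf lying in a left subtree of height e.
   Orient x -> y when lev x <= lev y and the leaf of y lies in the sibling subtree of
   x.  Arcs increase the leaf and there is no transitive triangle, so the underlying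
   graph is triangle-free; it is semilinear of complexity 5 in R^4, through the
   coordinates (leaf, first and last leaf of the sibling subtree, level).
   In an independent set, once a vertex sits at level h in a subtree of height h+1,
   every vertex at a level >= h with leaf in that subtree has its leaf in the left
   half.  Weighting the levels accordingly, the products of the weights over the
   levels sum to exactly A (a Kraft equality), whence sum_a 2^|I_a| <= (K+2) A over
   the leaves a and |I| <= (r+1) A as soon as (K+1)(K+2) <= 2^r.  For
   n ~ 2^(2^j), K ~ 2^j and r = 2j this gives ~ n 2^j / j ~ n log n / log log n
   vertices and no independent set of size n; for small n the edgeless graph
   suffices. *)

From Stdlib Require Import Reals.

(* A module, so that the MathComp notations imported here do not change the reading
   of the statement of [theorem1p2], whose [<] on nat and R are those of Stdlib. *)
Module SemilinearTriangleFree.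

From Stdlib Require Import Lra.
From mathcomp Require Import all_boot all_order all_algebra.
From mathcomp Require Import Rstruct zify.

Set Implicit Arguments.
Unset Strict Implicit.
Unset Printing Implicit Defensive.

Import Order.TTheory GRing.Theory Num.Theory.

(* [ins0 a e] is [a] with a binary digit 0 inserted at position [e]. *)
Definition ins0 (a e : nat) : nat := a %/ 2 ^ e * 2 ^ e.+1 + a %% 2 ^ e.

Lemma ins0E a e : ins0 a e = (a %/ 2 ^ e).*2 * 2 ^ e + a %% 2 ^ e.
Proof. by rewrite /ins0 expnS mulnA muln2. Qed.

Lemma ins0_div a e : ins0 a e %/ 2 ^ e = (a %/ 2 ^ e).*2.
Proof.
by rewrite ins0E divnMDl ?expn_gt0 // (divn_small (ltn_pmod _ _)) ?addn0 ?expn_gt0.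
Qed.

Lemma ins0_mod a e : ins0 a e %% 2 ^ e = a %% 2 ^ e.
Proof. by rewrite ins0E modnMDl modn_mod. Qed.

Lemma ins0_inj e : injective (ins0^~ e).
Proof.
move=> a b /= eq_ab; rewrite (divn_eq a (2 ^ e)) (divn_eq b (2 ^ e)).
rewrite -ins0_mod eq_ab ins0_mod; congr (_ * _ + _).
by apply: double_inj; rewrite -!ins0_div eq_ab.
Qed.

Lemma ins0_lt m a e : a < m * 2 ^ e -> ins0 a e < m * 2 ^ e.+1.
Proof.
move=> a_lt; have q_lt : a %/ 2 ^ e < m by rewrite ltn_divLR ?expn_gt0.
have r_lt : a %% 2 ^ e < 2 ^ e by rewrite ltn_pmod ?expn_gt0.
rewrite /ins0 expnS; move: q_lt r_lt.
set q := a %/ _; set r := a %% _; set p := 2 ^ e; nia.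
Qed.

Lemma half_eq_succ m n : ~~ odd m -> odd n -> m./2 = n./2 -> n = m.+1.
Proof.
move=> even_m odd_n eq_half.
by rewrite -(odd_double_half m) -(odd_double_half n) eq_half (negbTE even_m) odd_n.
Qed.

Lemma mul_exp2_le c k r : c <= k -> c * 2 ^ r <= r * 2 ^ r + k * 2 ^ c.
Proof.
move=> le_ck; case: (leqP c r) => [le_cr | lt_rc].
  by apply: leq_trans (leq_addr _ _); rewrite leq_mul2r le_cr orbT.
by apply: leq_trans (leq_addl _ _); rewrite leq_mul // leq_exp2l // ltnW.
Qed.

(* [act h q] marks the node number q at height h+1.  At level h a leaf gets weight 1
   if its ancestor there is unmarked, and otherwise 2 or 0 according as it lies in
   the left or the right subtree of that ancestor. *)
Definition weight (act : nat -> nat -> bool) (a h : nat) : nat :=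
  if act h (a %/ 2 ^ h.+1) then (if odd (a %/ 2 ^ h) then 0 else 2) else 1.

Lemma weightS act a h :
  weight act a h.+1 = weight (fun h => act h.+1) a./2 h.
Proof. by rewrite /weight -!divn2 -!divnMA -!expnS. Qed.

Lemma weight0_pair act a : weight act a.*2 0 + weight act a.*2.+1 0 = 2.
Proof.
rewrite /weight !divn1 !divn2 doubleK (half_bit_double a true) /= odd_double.
by case: (act 0 a).
Qed.

Lemma sum_pairs (F : nat -> nat) n :
  \sum_(a < n.*2) F a = \sum_(a < n) (F a.*2 + F a.*2.+1).
Proof.
elim: n => [|n IHn]; first by rewrite !big_ord0.
by rewrite doubleS !big_ord_recr /= IHn addnA.
Qed.

(* The two children of a node carry weights summing to 2. *)
Lemma kraft_sum act m H :
  \sum_(a < m * 2 ^ H) \prod_(h < H) weight act a h = m * 2 ^ H.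
Proof.
elim: H act => [|H IH] act.
  rewrite expn0 muln1 (eq_bigr (fun=> 1)) => [|a _]; last by rewrite big_ord0.
  by rewrite sum1_card card_ord.
rewrite expnSr mulnA muln2 (sum_pairs (fun a => \prod_(h < H.+1) weight act a h)).
transitivity (2 * \sum_(a < m * 2 ^ H) \prod_(h < H) weight (fun h => act h.+1) a h).
  rewrite big_distrr; apply: eq_bigr => a _; rewrite !big_ord_recl /=.
  under eq_bigr do rewrite /bump /= weightS.
  under [in X in _ + X]eq_bigr do rewrite /bump /= weightS.
  rewrite (half_bit_double a true) (half_bit_double a false) -mulnDl weight0_pair //.
by rewrite -mul2n; congr (_ * _); exact: IH.
Qed.

Section BinaryTree.

Variables M K : nat.

(* The vertex (a, e) lies at level e, over the leaf [ins0 a e] whose digit e is 0. *)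
Definition vertex := ('I_(M * 2 ^ K) * 'I_K.+1)%type.

Definition leaf (x : vertex) : nat := ins0 x.1 x.2.
Definition lev (x : vertex) : nat := x.2.

Definition arc (x y : vertex) : bool :=
  (lev x <= lev y) && (leaf y %/ 2 ^ lev x == (leaf x %/ 2 ^ lev x).+1).

Definition tree_adj (x y : vertex) : bool := arc x y || arc y x.

Lemma leaf_lt x : leaf x < M * 2 ^ K.+1.
Proof.
case: x => [[a a_lt] [e e_lt]]; rewrite /leaf /=.
have split_exp f : 2 ^ (K - e + f) = 2 ^ (K - e) * 2 ^ f by rewrite expnD.
move: a_lt; rewrite -(subnK (e_lt : e <= K)) -addnS !split_exp !mulnA.
exact: ins0_lt.
Qed.

Lemma leaf_lev_inj x y : leaf x = leaf y -> lev x = lev y -> x = y.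
Proof.
case: x y => [a e] [b f]; rewrite /leaf /lev /= => eq_leaf /val_inj eq_ef.
by subst f; congr pair; apply/val_inj/(ins0_inj eq_leaf).
Qed.

Lemma leaf_div_even x : ~~ odd (leaf x %/ 2 ^ lev x).
Proof. by rewrite ins0_div odd_double. Qed.

Lemma arc_leaf_lt x y : arc x y -> leaf x < leaf y.
Proof.
case/andP=> _ /eqP eq_div; rewrite ltnNge; apply/negP=> /(leq_div2r (2 ^ lev x)).
by rewrite eq_div ltnn.
Qed.

Lemma arc_irr x : ~~ arc x x.
Proof. by apply/negP=> /arc_leaf_lt; rewrite ltnn. Qed.

Lemma no_transitive_arcs u v w : arc u v -> arc v w -> arc u w -> False.
Proof.
case/andP=> le_uv /eqP uv /andP[_ /eqP vw] /andP[_ /eqP uw].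
have exp_v : 2 ^ lev v = 2 ^ lev u * 2 ^ (lev v - lev u) by rewrite -expnD subnKC.
have : leaf w %/ 2 ^ lev v = leaf v %/ 2 ^ lev v by rewrite exp_v !divnMA uw uv.
by rewrite vw; lia.
Qed.

Lemma tree_adj_triangle_free x y z :
  tree_adj x y -> tree_adj y z -> tree_adj x z -> False.
Proof.
have no_cycle u v w : arc u v -> arc v w -> arc w u -> False.
  by move=> /arc_leaf_lt ? /arc_leaf_lt ? /arc_leaf_lt ?; lia.
case/orP=> [xy|yx] /orP[yz|zy] /orP[xz|zx].
- exact: no_transitive_arcs xy yz xz.
- exact: no_cycle xy yz zx.
- exact: no_transitive_arcs xz zy xy.
- exact: no_transitive_arcs zx xy zy.
- exact: no_transitive_arcs yx xz yz.
- exact: no_transitive_arcs yz zx yx.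
- exact: no_cycle yx xz zy.
- exact: no_transitive_arcs zy yx zx.
Qed.

Section IndependentSet.

Variable I : {set vertex}.
Hypothesis I_indep : {in I &, forall x y, ~~ arc x y}.

Definition active (h q : nat) : bool :=
  [exists x in I, (lev x == h) && (leaf x %/ 2 ^ h.+1 == q)].

Definition leaf_class (a : nat) : {set vertex} := [set x in I | leaf x == a].

Definition class_height (a : nat) : nat := \max_(x in leaf_class a) (lev x).+1.

Lemma active_even x y : x \in I -> y \in I -> lev x <= lev y ->
  leaf x %/ 2 ^ (lev x).+1 = leaf y %/ 2 ^ (lev x).+1 ->
  ~~ odd (leaf y %/ 2 ^ lev x).
Proof.
move=> xI yI le_xy same_block; apply/negP=> odd_y.
have /negP[] := I_indep xI yI; rewrite /arc le_xy; apply/eqP.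
apply: half_eq_succ (leaf_div_even x) odd_y _.
by rewrite -!divn2 -!divnMA -!expnSr.
Qed.

Lemma weight_pos_below_height a h : h < class_height a -> 0 < weight active a h.
Proof.
move=> lt_h_height; have class_gt0 : 0 < #|leaf_class a|.
  rewrite card_gt0; apply: contraTneq lt_h_height.
  by rewrite /class_height => ->; rewrite big_set0.
have [y] := eq_bigmax_cond (fun x : vertex => (lev x).+1) class_gt0.
rewrite inE => /andP[yI /eqP leaf_y] height_y; subst a.
rewrite /weight; case: ifP => // /existsP[x /andP[xI /andP[/eqP lev_x /eqP block_x]]].
subst h; rewrite (negbTE (active_even xI yI _ block_x)) //.
by rewrite -ltnS -height_y.
Qed.

Lemma weight_class a x : x \in leaf_class a -> weight active a (lev x) = 2.
Proof.
rewrite inE => /andP[xI /eqP <-]; rewrite /weight (negbTE (leaf_div_even x)).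
suff -> : active (lev x) (leaf x %/ 2 ^ (lev x).+1) by [].
by apply/existsP; exists x; rewrite xI !eqxx.
Qed.

Lemma card_class_levels a : #|[set x.2 | x in leaf_class a]| = #|leaf_class a|.
Proof.
apply: card_in_imset => x y; rewrite !inE => /andP[_ /eqP xa] /andP[_ /eqP ya] eq_xy.
by apply: leaf_lev_inj; rewrite ?xa ?ya // /lev eq_xy.
Qed.

Lemma card_class_le a : #|leaf_class a| <= K.+1.
Proof.
by rewrite -card_class_levels; apply: leq_trans (max_card _) _; rewrite card_ord.
Qed.

Lemma lev_lt_class_height a x : x \in leaf_class a -> lev x < class_height a.
Proof. exact: leq_bigmax_cond. Qed.

Lemma class_height_le a : class_height a <= K.+1.
Proof. by apply/bigmax_leqP => x _; apply: ltn_ord. Qed.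

Lemma exp_card_class a :
  2 ^ #|leaf_class a| <= \prod_(h < class_height a) weight active a h.
Proof.
set L := [set x.2 | x in leaf_class a].
rewrite (big_ord_widen _ _ (class_height_le a)) (bigID (mem L)) /=.
have -> : \prod_(h < K.+1 | (h < class_height a) && (h \in L)) weight active a h =
          2 ^ #|leaf_class a|.
  rewrite -card_class_levels -/L -prod_nat_const.
  apply: eq_big => [h | _ /andP[_ /imsetP[x x_in ->]]]; last exact: weight_class.
  by rewrite andb_idl // => /imsetP[x x_in ->]; apply: lev_lt_class_height.
rewrite -[X in X <= _]muln1 leq_mul2l; apply/orP; right.
by apply: prodn_cond_gt0 => h /andP[lt_h_height _]; apply: weight_pos_below_height.
Qed.

Lemma sum_exp_card_class :
  \sum_(a < M * 2 ^ K.+1) 2 ^ #|leaf_class a| <= K.+2 * (M * 2 ^ K.+1).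
Proof.
apply: (@leq_trans
  (\sum_(a < M * 2 ^ K.+1) \sum_(H < K.+2) \prod_(h < H) weight active a h)).
  apply: leq_sum => a _; apply: leq_trans (exp_card_class a) _.
  have height_lt : class_height a < K.+2 := class_height_le a.
  by rewrite (bigD1 (Ordinal height_lt)) //= leq_addr.
rewrite exchange_big /= -[X in _ <= X * _](card_ord K.+2) -sum_nat_const.
apply/eq_leq/eq_bigr => H _.
have split_A : M * 2 ^ K.+1 = M * 2 ^ (K.+1 - H) * 2 ^ H.
  by rewrite -mulnA -expnD subnK // -ltnS.
by rewrite split_A kraft_sum.
Qed.

Lemma card_indep : #|I| = \sum_(a < M * 2 ^ K.+1) #|leaf_class a|.
Proof.
rewrite -sum1_card (partition_big (fun x => Ordinal (leaf_lt x)) xpredT) //=.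
apply: eq_bigr => a _; rewrite -sum1_card.
by apply: eq_bigl => x; rewrite !inE -val_eqE.
Qed.

Lemma indep_card_bound r :
  #|I| * 2 ^ r <= M * 2 ^ K.+1 * (r * 2 ^ r + K.+1 * K.+2).
Proof.
rewrite card_indep big_distrl /=.
apply: (@leq_trans
  (\sum_(a < M * 2 ^ K.+1) (r * 2 ^ r + K.+1 * 2 ^ #|leaf_class a|))).
  by apply: leq_sum => a _; apply: mul_exp2_le; apply: card_class_le.
rewrite big_split /= sum_nat_const card_ord -big_distrr /= mulnDr leq_add2l.
by rewrite mulnCA leq_mul2l [_ * K.+2]mulnC sum_exp_card_class orbT.
Qed.

Lemma indep_card_le r : K.+1 * K.+2 <= 2 ^ r -> #|I| <= r.+1 * (M * 2 ^ K.+1).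
Proof.
move=> levels_le; rewrite -(leq_pmul2r (expn_gt0 2 r)).
apply: leq_trans (indep_card_bound r) _; rewrite mulnC mulnAC leq_mul2r.
by rewrite [r.+1 * _]mulSn [2 ^ r + _]addnC leq_add2l levels_le orbT.
Qed.

End IndependentSet.

End BinaryTree.

Section Semilinear.

Local Open Scope ring_scope.

Section SemilinearGraph.

Variables (T : finType) (d t : nat) (P : T -> 'rV[R]_d).
Variables (F : 'I_t -> lincoef d) (phi : boolfun t).
Local Notation edge x y := (semilin_adj F phi (P x) (P y)).

Lemma semilinear_not_ramsey n N :
  (0 < d)%N -> injective P -> (forall x y, edge x y = edge y x) ->
  (forall x y z, edge x y -> edge y z -> edge x z -> False) ->
  (forall S : {set T}, {in S &, forall x y, x != y -> ~~ edge x y} -> (#|S| < n)%N) ->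
  (N <= #|T|)%N -> ~ ramsey_prop t 3 n N.
Proof.
move=> d_gt0 P_inj edge_sym triangle_free indep_lt le_N ramsey.
pose emb (i : 'I_N) : T := enum_val (widen_ord le_N i).
have emb_inj : injective emb by move=> i j /enum_val_inj /(congr1 val) /= /val_inj.
have Pemb_inj : injective (P \o emb) by move=> i j /P_inj/emb_inj.
case: (ramsey d _ F phi d_gt0 Pemb_inj (fun i j _ => edge_sym (emb i) (emb j))).
  case=> S [card_S clique_S]; have : (2 < #|S|)%N by rewrite card_S.
  case/card_gt2P=> x [y [z [[xS yS zS] [xy yz zx]]]].
  by apply: (triangle_free (emb x) (emb y) (emb z)); apply: clique_S; rewrite // eq_sym.
case=> S [card_S indep_S].
suff : (#|emb @: S| < n)%N by rewrite card_imset // card_S ltnn.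
apply: indep_lt => _ _ /imsetP[x xS ->] /imsetP[y yS ->] exy.
by apply: indep_S => //; apply: contraNneq exy => ->.
Qed.

End SemilinearGraph.

Lemma edgeless_not_ramsey t n N : (N < n)%N -> ~ ramsey_prop t 3 n N.
Proof.
move=> lt_Nn.
apply: (@semilinear_not_ramsey 'I_N 1 t (fun i => const_mx i%:R) (fun=> (0, 0, 0))
          (fun _ _ _ => false)) => //.
- by move=> i j /matrixP/(_ 0 0); rewrite !mxE => /eqP; rewrite eqr_nat => /eqP/val_inj.
- move=> S _; apply: leq_ltn_trans lt_Nn.
  by rewrite -[N in (_ <= N)%N]card_ord max_card.
- by rewrite card_ord.
Qed.

Definition coord_diff d (i j : 'I_d) : lincoef d := (delta_mx 0 i, - delta_mx 0 j, 0).

Lemma sum_delta_row d (i : 'I_d) (x : 'rV[R]_d) :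
  \sum_(k < d) (delta_mx 0 i : 'rV[R]_d) 0 k * x 0 k = x 0 i.
Proof.
rewrite (bigD1 i) //= mxE !eqxx mul1r big1 ?addr0 // => k /negbTE neq_ki.
by rewrite mxE neq_ki mul0r.
Qed.

Lemma lin_eval_coord_diff d (i j : 'I_d) x y :
  lin_eval (coord_diff i j) x y = x 0 i - y 0 j.
Proof.
rewrite /lin_eval /= !RplusE add0r sum_delta_row; congr (_ + _).
by rewrite -(sum_delta_row j) -sumrN; apply: eq_bigr => k _; rewrite mxE mulNr.
Qed.

End Semilinear.

Section TreeModel.

Local Open Scope ring_scope.

Variables M K : nat.
Implicit Types x y : vertex M K.

Definition lo x : nat := ((leaf x %/ 2 ^ lev x).+1 * 2 ^ lev x)%N.
Definition hi x : nat := ((leaf x %/ 2 ^ lev x).+2 * 2 ^ lev x)%N.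

Lemma arcE x y :
  arc x y = [&& (lev x <= lev y)%N, (lo x <= leaf y)%N & (leaf y < hi x)%N].
Proof.
rewrite /arc eqn_leq leq_divRL ?expn_gt0 // -(ltnS (leaf y %/ _)).
by rewrite ltn_divLR ?expn_gt0 // [X in _ && X]andbC.
Qed.

Definition c_leaf : 'I_4 := @Ordinal 4 0 isT.
Definition c_lo : 'I_4 := @Ordinal 4 1 isT.
Definition c_hi : 'I_4 := @Ordinal 4 2 isT.
Definition c_lev : 'I_4 := @Ordinal 4 3 isT.

Definition tree_point x : 'rV[R]_4 :=
  \row_(i < 4) (nth 0%N [:: leaf x; lo x; hi x; lev x] i)%:R.

Definition tree_lin (i : 'I_5) : lincoef 4 :=
  match val i with
  | 0 => coord_diff c_lev c_lev
  | 1 => coord_diff c_lo c_leaf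
  | 2 => coord_diff c_hi c_leaf
  | 3 => coord_diff c_leaf c_lo
  | _ => coord_diff c_leaf c_hi
  end.

(* The first disjunct is [arc x y], the second [arc y x]. *)
Definition tree_phi : boolfun 5 := fun lt le _ =>
  [&& le (@Ordinal 5 0 isT), le (@Ordinal 5 1 isT) & ~~ le (@Ordinal 5 2 isT)] ||
  [&& ~~ lt (@Ordinal 5 0 isT), ~~ lt (@Ordinal 5 3 isT) & lt (@Ordinal 5 4 isT)].

Lemma tree_adjE x y :
  semilin_adj tree_lin tree_phi (tree_point x) (tree_point y) = tree_adj x y.
Proof.
rewrite /semilin_adj /tree_phi !ffunE /= !lin_eval_coord_diff !mxE /=.
rewrite !subr_le0 !subr_lt0 !ler_nat !ltr_nat -!leqNgt -!ltnNge.
by rewrite /tree_adj !arcE.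
Qed.

Lemma tree_point_inj : injective tree_point.
Proof.
move=> x y /matrixP eq_xy.
have coord_eq (i : 'I_4) :
    nth 0%N [:: leaf x; lo x; hi x; lev x] i = nth 0%N [:: leaf y; lo y; hi y; lev y] i.
  by move: (eq_xy 0 i); rewrite !mxE => /eqP; rewrite eqr_nat => /eqP.
exact: leaf_lev_inj (coord_eq c_leaf) (coord_eq c_lev).
Qed.

End TreeModel.

Lemma tree_not_ramsey M K r n N :
  K.+1 * K.+2 <= 2 ^ r -> r.+1 * (M * 2 ^ K.+1) < n -> N <= M * 2 ^ K * K.+1 ->
  ~ ramsey_prop 5 3 n N.
Proof.
move=> levels_le lt_n le_N.
apply: (@semilinear_not_ramsey _ 4 5 (@tree_point M K) tree_lin tree_phi) => //.
- exact: tree_point_inj.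
- by move=> x y; rewrite !tree_adjE /tree_adj orbC.
- by move=> x y z; rewrite !tree_adjE; apply: tree_adj_triangle_free.
- move=> S S_indep; apply: leq_ltn_trans lt_n.
  have arc_free : {in S &, forall x y, ~~ arc x y}.
    move=> x y xS yS; have [-> | neq_xy] := eqVneq x y; first exact: arc_irr.
    by move: (S_indep x y xS yS neq_xy); rewrite tree_adjE negb_or => /andP[].
  exact: indep_card_le arc_free r levels_le.
- by rewrite card_prod !card_ord.
Qed.

Lemma linear_le_exp2 j : 3 <= j -> 3 * j + 6 <= 2 ^ j.+1.
Proof.
elim: j => // j IHj; rewrite leq_eqVlt => /orP[/eqP <- // | /IHj le_j].
by rewrite expnS; lia.
Qed.

Lemma double_log_bounds n : 256 <= n ->
  exists2 i, 1 < i & 2 ^ 2 ^ i.+1 <= n < 2 ^ 2 ^ i.+2.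
Proof.
move=> n_ge; have n_gt0 : 0 < n by apply: leq_trans n_ge.
have L_ge : 8 <= trunc_log 2 n by apply: trunc_log_max.
have /andP[L_lo L_hi] := trunc_log_bounds (isT : 1 < 2) n_gt0.
move: (trunc_log 2 n) L_ge L_lo L_hi => L L_ge L_lo L_hi.
have L_gt0 : 0 < L by apply: leq_trans L_ge.
have i_ge : 3 <= trunc_log 2 L by apply: trunc_log_max.
have /andP[i_lo i_hi] := trunc_log_bounds (isT : 1 < 2) L_gt0.
move: (trunc_log 2 L) i_ge i_lo i_hi => [//|i] i_ge i_lo i_hi.
exists i => //; apply/andP; split.
  by apply: leq_trans L_lo; rewrite leq_exp2l.
by apply: leq_trans L_hi _; rewrite leq_exp2l.
Qed.

Lemma tree_size_bounds i n : 1 < i -> 2 ^ 2 ^ i.+1 <= n ->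
  exists M K, [/\ K.+1 * K.+2 <= 2 ^ (i.+1 + i.+1),
    (i.+1 + i.+1).+1 * (M * 2 ^ K.+1) < n &
    n * 2 ^ i.+2 <= 168 * i * (M * 2 ^ K * K.+1)].
Proof.
move=> i_gt1 n_lo.
have P_ge := @linear_le_exp2 i.+1 i_gt1; rewrite (expnS 2 i.+1) in P_ge.
have [K def_P] : exists K, 2 ^ i.+1 = K + i + 4 by exists (2 ^ i.+1 - i - 4); lia.
have exp_P : 2 ^ 2 ^ i.+1 = 2 ^ K * 8 * 2 ^ i.+1.
  rewrite {1}def_P -addnA addnC expnD mulnC (expnD 2 i 4) (expnS 2 i).
  by move: (2 ^ K) (2 ^ i) => a b; lia.
pose D := (i.+1 + i.+1).+1 * 2 ^ K.+1.
have D2_le : D.*2 <= n.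
  apply: leq_trans n_lo; rewrite exp_P /D expnS -muln2.
  by move: (2 ^ K) (2 ^ i.+1) P_ge => Q P; nia.
pose m := n %/ D.*2.
have m_gt0 : 0 < m by rewrite divn_gt0 ?double_gt0 ?muln_gt0 ?expn_gt0.
have m_le : m * D.*2 <= n := leq_divM n D.*2.
have m_lt : n < m.+1 * D.*2 by apply: ltn_ceil; rewrite double_gt0 muln_gt0 expn_gt0.
exists m, K; split.
- by rewrite expnD; apply: leq_mul; lia.
- by rewrite /D in m_le *; rewrite mulnCA; move: (_ * _) m_le m_gt0 => E; lia.
rewrite /D (expnS 2 K) in m_lt; rewrite (expnS 2 i.+1) def_P; rewrite def_P in P_ge.
move: (2 ^ K) m_lt m_gt0 => Q m_lt m_gt0.
have n_le : n <= 8 * (i.+1 + i.+1).+1 * (m * Q).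
  have m2 : m.+1 <= m.*2 by lia.
  apply: ltnW (leq_trans m_lt (leq_trans (leq_mul m2 (leqnn _)) _)); lia.
have K_ge : 2 * (K + i + 4) <= 6 * K.+1 by lia.
have i_ge : 6 * (8 * (i.+1 + i.+1).+1) <= 168 * i by lia.
apply: leq_trans (leq_mul (leqnn n) K_ge) _.
move: (m * Q) n_le => W n_le.
have n6 : n * 6 <= 168 * i * W.
  apply: leq_trans (leq_mul n_le (leqnn 6)) _.
  by rewrite mulnC mulnA leq_mul2r i_ge orbT.
by rewrite !mulnA leq_mul2r n6 orbT.
Qed.

Section RealEstimates.

Local Open Scope R_scope.

Lemma INR_expn a m : INR (a ^ m)%N = INR a ^ m.
Proof. by elim: m => [|m IHm] //=; rewrite expnS mult_INR IHm. Qed.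

Lemma ln_le_ln x y : 0 < x -> x <= y -> ln x <= ln y.
Proof.
by move=> x_gt0 [lt_xy | ->]; [apply/Rlt_le/ln_increasing | apply: Rle_refl].
Qed.

Lemma ln_le_sub1 x : 0 < x -> ln x <= x - 1.
Proof. by move=> x_gt0; have := exp_ineq1_le (ln x); rewrite exp_ln //; lra. Qed.

Lemma ln_ge_1_sub_inv x : 0 < x -> 1 - / x <= ln x.
Proof.
move=> x_gt0; have := ln_le_sub1 (Rinv_0_lt_compat x x_gt0).
by rewrite ln_Rinv //; lra.
Qed.

Lemma ln3_ge : 33 / 32 <= ln 3.
Proof.
have pow_le_3 : (32 / 31) ^ 33 <= 3 by simpl; lra.
have ln_base : 1 / 32 <= ln (32 / 31).
  by have := ln_ge_1_sub_inv (ltac:(lra) : 0 < 32 / 31); rewrite Rinv_div; lra.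
have := ln_le_ln (pow_lt (32 / 31) 33 ltac:(lra)) pow_le_3.
rewrite ln_pow; last lra.
have -> : INR 33 = 33 by simpl; lra.
lra.
Qed.

Lemma Rdiv_le_of_le_mul a b c : 0 < c -> a <= b * c -> a / c <= b.
Proof.
move=> c_gt0 le_ab; apply: (Rmult_le_reg_r c) => //.
by rewrite /Rdiv Rmult_assoc Rinv_l; lra.
Qed.

Lemma small_case_bound n : (3 <= n)%N -> (n < 256)%N ->
  1 / 10000 * INR n * ln (INR n) / ln (ln (INR n)) <= INR n.
Proof.
move=> n_ge n_lt; set x := INR n.
have x_ge : 3 <= x by have := le_INR 3 n (elimT ssrnat.leP n_ge); rewrite /x /=; lra.
have x_le : x <= 256.
  have := le_INR n 256 (elimT ssrnat.leP (ltnW n_lt)).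
  by have -> : INR 256 = 256 by rewrite INR_IZR_INZ.
have lnx_ge : 33 / 32 <= ln x by apply: Rle_trans ln3_ge (ln_le_ln _ x_ge); lra.
have lnlnx_ge : 1 / 33 <= ln (ln x).
  have := ln_ge_1_sub_inv (ltac:(lra) : 0 < ln x).
  have := Rinv_le_contravar _ _ (ltac:(lra) : 0 < 33 / 32) lnx_ge.
  rewrite Rinv_div; lra.
have lnx_le : ln x <= 255 by have := ln_le_sub1 (ltac:(lra) : 0 < x); lra.
apply: Rdiv_le_of_le_mul; first lra.
nra.
Qed.

Lemma large_case_bound n i V : (0 < i)%N ->
  (2 ^ 2 ^ i.+1 <= n)%N -> (n < 2 ^ 2 ^ i.+2)%N -> (n * 2 ^ i.+2 <= 168 * i * V)%N ->
  1 / 10000 * INR n * ln (INR n) / ln (ln (INR n)) <= INR V.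
Proof.
move=> i_gt0 n_lo n_hi n_le.
set x := INR n; set P := INR (2 ^ i.+1)%N.
have ln2_lo := ln_lt_2.
have INR2 : INR 2 = 2 by simpl; lra.
have P_eq : P = 2 * 2 ^ i by rewrite /P INR_expn INR2.
have pow_gt0 : 0 < 2 ^ i by apply: pow_lt; lra.
have x_gt0 : 0 < x.
  by apply: lt_0_INR; apply/ssrnat.ltP; apply: leq_trans n_lo; rewrite expn_gt0.
have i_ge1 : 1 <= INR i by apply: (le_INR 1 i); apply/ssrnat.leP.
have exp_lnx m : (2 ^ m <= n)%N -> INR m * ln 2 <= ln x.
  move=> le_n; rewrite -ln_pow; last lra.
  apply: ln_le_ln; first by apply: pow_lt; lra.
  by rewrite -INR2 -INR_expn; apply/le_INR/ssrnat.leP.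
have lnx_ge := exp_lnx _ n_lo; rewrite -/P in lnx_ge.
have lnx_lt : ln x < 2 * P * ln 2.
  have -> : 2 * P = INR (2 ^ i.+2)%N by rewrite (expnS 2 i.+1) mult_INR INR2.
  rewrite -ln_pow; last lra.
  apply: ln_increasing => //.
  by rewrite -INR2 -INR_expn; apply/lt_INR/ssrnat.ltP.
have lnlnx_ge : INR i * ln 2 <= ln (ln x).
  rewrite -ln_pow; last lra.
  by apply: ln_le_ln; [apply: pow_lt; lra | nra].
have nV : x * (2 * P) <= 168 * INR i * INR V.
  have := le_INR _ _ (elimT ssrnat.leP n_le).
  rewrite (expnS 2 i.+1) (mult_INR n) (mult_INR 2) INR2 -/P -/x.
  rewrite (mult_INR (168 * i)) (mult_INR 168).
  by have -> : INR 168 = 168 by rewrite INR_IZR_INZ.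
have V_ge0 := pos_INR V.
apply: Rdiv_le_of_le_mul; first nra.
apply: (@Rle_trans _ (1 / 10000 * (x * (2 * P)) * ln 2)); first nra.
apply: (@Rle_trans _ (INR V * (INR i * ln 2))); nra.
Qed.

Lemma semilinear_ramsey_lower_bound : exists t : nat, (0 < t)%coq_nat /\
  exists c : R, 0 < c /\
  forall n : nat, (3 <= n)%coq_nat ->
    Rt_ge t 3 n (c * INR n * ln (INR n) / ln (ln (INR n))).
Proof.
exists 5%N; split; first exact/ssrnat.ltP.
exists (1 / 10000); split; first lra.
move=> n /ssrnat.leP n_ge N /RltP lt_N.
have [n_small | n_large] := ltnP n 256.
  apply: edgeless_not_ramsey; apply/ssrnat.ltP/INR_lt.
  exact: Rlt_le_trans lt_N (small_case_bound n_ge n_small).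
have [i i_gt1 /andP[n_lo n_hi]] := double_log_bounds n_large.
have [M [K [levels_le lt_n le_V]]] := tree_size_bounds i_gt1 n_lo.
apply: tree_not_ramsey levels_le lt_n _; apply/ltnW/ssrnat.ltP/INR_lt.
exact: Rlt_le_trans lt_N (large_case_bound (ltnW i_gt1) n_lo n_hi le_V).
Qed.

End RealEstimates.

End SemilinearTriangleFree.

Theorem theorem1p2 :
  exists t : nat, (0 < t)%nat /\
  exists c : R, (0 < c)%R /\
  forall n : nat, (3 <= n)%nat ->
    Rt_ge t 3 n (c * INR n * ln (INR n) / ln (ln (INR n)))%R.
Proof. exact SemilinearTriangleFree.semilinear_ramsey_lower_bound. Qed.
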